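(* Let $\mathcal{X}_V,\mathcal{X}_L$ be finite sets, $\mathcal{P}_M$ a joint distribution on $\mathcal{X}_V\times\mathcal{X}_L$ with everywhere positive marginals $\mathcal{P}_V,\mathcal{P}_L$, and let each sample $x$ have a ground-truth label $y(x)$. Let $\alpha=\mathbb{E}_{(x_v,x_l)\sim\mathcal{P}_M}\mathbb{1}[y(x_v)\ne y(x_l)]$, let $\mathcal{P}_T(x_v,x_v')=\mathbb{E}_{x_l\sim\mathcal{P}_L}\mathcal{P}_M(x_v|x_l)\mathcal{P}_M(x_v'|x_l)$ with $\mathcal{P}_M(x_v|x_l)=\mathcal{P}_M(x_v,x_l)/\mathcal{P}_L(x_l)$, and define $\alpha_T=\sum_{x_v,x_v'\in\mathcal{X}_V}\mathcal{P}_T(x_v,x_v')\,\mathbb{1}[y(x_v)\ne y(x_v')]$. Then $\alpha\ge\frac12\alpha_T$. *)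

From mathcomp Require Import all_boot all_order all_algebra.
Set Implicit Arguments. Unset Strict Implicit. Unset Printing Implicit Defensive.
Import Order.TTheory GRing.Theory Num.Theory.
Local Open Scope ring_scope.

Section Defs.
Variables (R : realFieldType) (XV XL : finType).
Variable PM : XV -> XL -> R.

Definition PV (xv : XV) : R := \sum_(xl : XL) PM xv xl.
Definition PL (xl : XL) : R := \sum_(xv : XV) PM xv xl.

Definition is_joint_distr : Prop :=
  (forall xv xl, 0 <= PM xv xl) /\ \sum_(xv : XV) \sum_(xl : XL) PM xv xl = 1.

Definition condM (xv : XV) (xl : XL) : R := PM xv xl / PL xl.

Definition PT (xv xv' : XV) : R :=
  \sum_(xl : XL) PL xl * (condM xv xl * condM xv' xl).

Variables (Y : eqType) (yV : XV -> Y) (yL : XL -> Y).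

Definition alpha : R :=
  \sum_(xv : XV) \sum_(xl : XL) PM xv xl * (yV xv != yL xl)%:R.

Definition alphaT : R :=
  \sum_(xv : XV) \sum_(xv' : XV) PT xv xv' * (yV xv != yV xv')%:R.
End Defs.

From mathcomp Require Import all_boot all_order all_algebra.
From mathcomp Require Import ring.
Import Order.TTheory GRing.Theory Num.Theory.
Local Open Scope ring_scope.

(* Draw x_l ~ P_L and then x_v, x_v' independently from P_M( . | x_l).  The
   pairs (x_v, x_l) and (x_v', x_l) are then both distributed as P_M, and
   [y(x_v) <> y(x_v')] forces [y(x_v) <> y(x_l)] or [y(x_v') <> y(x_l)].
   Taking expectations gives alpha_T <= alpha + alpha. *)

Lemma neq_triangle (R : numDomainType) (Y : eqType) (x y z : Y) :
  (x != y)%:R <= (x != z)%:R + (y != z)%:R :> R.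
Proof.
case: (eqVneq x z) => [xz|xz]; case: (eqVneq y z) => [yz|yz]; subst => /=.
- by rewrite eqxx addr0.
- by rewrite eq_sym yz add0r.
- by rewrite addr0 lern1 leq_b1.
- by rewrite ler_wpDr ?ler0n // lern1 leq_b1.
Qed.

Section ConditionalCoupling.
Variables (R : realFieldType) (XV XL : finType) (PM : XV -> XL -> R).
Hypothesis PM_ge0 : forall xv xl, 0 <= PM xv xl.
Hypothesis PL_gt0 : forall xl, 0 < PL PM xl.

(* The law of the triple (x_v, x_v', x_l) in which x_v and x_v' are
   conditionally independent given x_l, each with conditional law P_M. *)
Definition coupling (xv xv' : XV) (xl : XL) : R := PM xv xl * PM xv' xl / PL PM xl.

Lemma couplingC xv xv' xl : coupling xv xv' xl = coupling xv' xv xl.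
Proof. by rewrite /coupling (mulrC (PM xv xl)). Qed.

Lemma coupling_ge0 xv xv' xl : 0 <= coupling xv xv' xl.
Proof. by rewrite /coupling !mulr_ge0 // invr_ge0 ltW. Qed.

Lemma PT_coupling xv xv' : PT PM xv xv' = \sum_xl coupling xv xv' xl.
Proof.
apply: eq_bigr => xl _; rewrite /coupling /condM.
have := PL_gt0 xl; move: (PL PM xl) => p p_gt0.
by field; rewrite gt_eqF.
Qed.

Lemma sum_coupling xv xl : \sum_xv' coupling xv xv' xl = PM xv xl.
Proof.
rewrite /coupling -mulr_suml -mulr_sumr -/(PL PM xl) -mulrA mulfV ?mulr1 //.
by rewrite gt_eqF.
Qed.

Variables (Y : eqType) (yV : XV -> Y) (yL : XL -> Y).

Lemma alpha_coupling :
  \sum_xv \sum_xv' \sum_xl coupling xv xv' xl * (yV xv != yL xl)%:R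
  = alpha PM yV yL.
Proof.
apply: eq_bigr => xv _; rewrite exchange_big /=; apply: eq_bigr => xl _.
by rewrite -mulr_suml sum_coupling.
Qed.

Lemma alpha_coupling_swap :
  \sum_xv \sum_xv' \sum_xl coupling xv xv' xl * (yV xv' != yL xl)%:R
  = alpha PM yV yL.
Proof.
rewrite -alpha_coupling exchange_big /=.
apply: eq_bigr => xv _; apply: eq_bigr => xv' _.
by under eq_bigr do rewrite couplingC.
Qed.

Lemma alphaT_le_2alpha : alphaT PM yV <= alpha PM yV yL *+ 2.
Proof.
rewrite mulr2n -[X in X + _]alpha_coupling -alpha_coupling_swap -big_split /=.
apply: ler_sum => xv _; rewrite -big_split /=; apply: ler_sum => xv' _.
rewrite PT_coupling mulr_suml -big_split /=; apply: ler_sum => xl _.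
by rewrite -mulrDr ler_wpM2l ?coupling_ge0 ?neq_triangle.
Qed.

End ConditionalCoupling.

Theorem propositionA1 (R : realFieldType) (XV XL : finType) (PM : XV -> XL -> R)
  (Y : eqType) (yV : XV -> Y) (yL : XL -> Y) :
  is_joint_distr PM ->
  (forall xv, 0 < PV PM xv) ->
  (forall xl, 0 < PL PM xl) ->
  alphaT PM yV / 2 <= alpha PM yV yL.
Proof.
move=> [PM_ge0 _] _ PL_gt0.
rewrite ler_pdivrMr ?ltr0n // mulr_natr.
exact: alphaT_le_2alpha.
Qed.
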